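(* Let $G=(V,q)$ be a finite connected reversible graph with non-negative Ollivier curvature, and let $\lambda_1$ be the smallest non-zero eigenvalue of $-\Delta$. Then \[ \lambda_1\ge\log(2)\cdot\frac{q_{\min}}{\operatorname{diam}(G)^2}, \] where $\operatorname{diam}(G)=\max\{d(x,y):x,y\in V\}$.
   Context: A graph $G=(V,q)$: $V$ finite, $q:V\times V\to[0,\infty)$; Laplacian $\Delta f(x)=\sum_yq(x,y)(f(y)-f(x))$. Reversible: there is $m:V\to(0,\infty)$ with $q(x,y)m(x)=q(y,x)m(y)$. $d$ is the combinatorial graph distance ($x\sim y$ iff $q(x,y)>0$). $q_{\min}=\min\{q(x,y):q(x,y)>0\}$. For $x\ne y$, $\nabla_{xy}f=(f(x)-f(y))/d(x,y)$, $\|\nabla f\|_\infty=\sup_{x\ne y}|\nabla_{xy}f|$. Ollivier curvature $\kappa(x,y)=\inf\{\nabla_{xy}\Delta f:\|\nabla f\|_\infty=1,\ \nabla_{yx}f=1\}$; non-negative means $\kappa(x,y)\ge0$ for all $x\ne y$. *)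

From Stdlib Require Import Reals List Arith Bool.
Import ListNotations.
Open Scope R_scope.

(* A finite graph on vertex set V = {0,...,n-1} (vertices are naturals < n),
   with rates q : nat -> nat -> R (only values on V x V matter). *)

Definition vsum (n : nat) (F : nat -> R) : R :=
  fold_right Rplus 0 (map F (seq 0 n)).

Definition laplacian (n : nat) (q : nat -> nat -> R) (f : nat -> R) (x : nat) : R :=
  vsum n (fun y => q x y * (f y - f x)).

Definition adjb (q : nat -> nat -> R) (x y : nat) : bool :=
  if Rlt_dec 0 (q x y) then true else false.

Fixpoint reachb (n : nat) (q : nat -> nat -> R) (k x y : nat) : bool :=
  match k with
  | O => Nat.eqb x y
  | S k' => existsb (fun z => andb (adjb q x z) (reachb n q k' z y)) (seq 0 n)
  end.

Fixpoint dist_aux (n : nat) (q : nat -> nat -> R) (x y k fuel : nat) : nat :=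
  match fuel with
  | O => k
  | S f => if reachb n q k x y then k else dist_aux n q x y (S k) f
  end.

(* Combinatorial graph distance: least k with a k-step walk from x to y
   (a shortest walk in a connected graph on n vertices has < n steps). *)
Definition dist (n : nat) (q : nat -> nat -> R) (x y : nat) : nat :=
  dist_aux n q x y 0 n.

Inductive walk (n : nat) (q : nat -> nat -> R) : nat -> nat -> Prop :=
  | walk_refl : forall x, walk n q x x
  | walk_step : forall x z y, (z < n)%nat -> 0 < q x z -> walk n q z y -> walk n q x y.

Definition connected (n : nat) (q : nat -> nat -> R) : Prop :=
  forall x y, (x < n)%nat -> (y < n)%nat -> walk n q x y.

Definition reversible (n : nat) (q : nat -> nat -> R) : Prop :=
  exists m : nat -> R,
    (forall x, (x < n)%nat -> 0 < m x) /\
    (forall x y, (x < n)%nat -> (y < n)%nat -> q x y * m x = q y x * m y).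

Definition grad (n : nat) (q : nat -> nat -> R) (f : nat -> R) (x y : nat) : R :=
  (f x - f y) / INR (dist n q x y).

(* ||∇f||_∞ = sup_{x≠y} |∇_{xy} f|  (a maximum, V being finite) equals 1. *)
Definition grad_sup_eq1 (n : nat) (q : nat -> nat -> R) (f : nat -> R) : Prop :=
  (forall u v, (u < n)%nat -> (v < n)%nat -> u <> v -> Rabs (grad n q f u v) <= 1) /\
  (exists u v, (u < n)%nat /\ (v < n)%nat /\ u <> v /\ Rabs (grad n q f u v) = 1).

(* κ(x,y) = inf { ∇_{xy}Δf : ||∇f||_∞ = 1, ∇_{yx} f = 1 } >= 0, i.e. every
   element of the set is >= 0. *)
Definition ollivier_nonneg_at (n : nat) (q : nat -> nat -> R) (x y : nat) : Prop :=
  forall f : nat -> R,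
    grad_sup_eq1 n q f -> grad n q f y x = 1 ->
    0 <= grad n q (laplacian n q f) x y.

Definition ollivier_nonneg (n : nat) (q : nat -> nat -> R) : Prop :=
  forall x y, (x < n)%nat -> (y < n)%nat -> x <> y -> ollivier_nonneg_at n q x y.

Definition vpairs (n : nat) : list (nat * nat) := list_prod (seq 0 n) (seq 0 n).

(* q_min = min { q(x,y) : q(x,y) > 0 }  (0 if there is no edge). *)
Definition qmin (n : nat) (q : nat -> nat -> R) : R :=
  match map (fun p => q (fst p) (snd p))
            (filter (fun p => adjb q (fst p) (snd p)) (vpairs n)) with
  | [] => 0
  | h :: t => fold_right Rmin h t
  end.

Definition diam (n : nat) (q : nat -> nat -> R) : nat :=
  fold_right Nat.max 0%nat (map (fun p => dist n q (fst p) (snd p)) (vpairs n)).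

Definition is_eigenvalue_negLap (n : nat) (q : nat -> nat -> R) (lam : R) : Prop :=
  exists f : nat -> R,
    (exists x, (x < n)%nat /\ f x <> 0) /\
    (forall x, (x < n)%nat -> - laplacian n q f x = lam * f x).

From Stdlib Require Import Reals List Arith Bool Lra Lia Psatz Classical.
(* Imported after Reals so that [dist] denotes the graph distance. *)
Import ListNotations.
Open Scope R_scope.

(* Spectral gap of a non-negatively curved graph via a discrete "modulus of
   continuity" argument.

   Let f be an eigenfunction of -Δ for λ ≠ 0; it is non-constant.  With
   D = diam(G) put ρ(s) = s (2D + 2 - s), a concave function of s ∈ ℕ with
   ρ(0) = 0.  Choose the smallest M > 0 with f(v) - f(u) ≤ M ρ(d(u,v)) for
   all u, v, and a pair (x,y) attaining it.  The inf-convolution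
   h(v) = min_z f(z) + α d(z,v), with α = M (ρ(d+1) - ρ(d)) the slope of Mρ
   at d = d(x,y), is α-Lipschitz, lies below f, touches f at x and has
   maximal growth α d from x to y.  Non-negative Ollivier curvature then
   gives Δh(y) ≤ Δh(x), while the strict concavity of ρ along a geodesic
   neighbour of x (resp. y) gives Δf(x) - Δh(x) ≥ 2M q_min and
   Δh(y) - Δf(y) ≥ 2M q_min.  Hence λ M ρ(d) = Δf(x) - Δf(y) ≥ 4M q_min,
   and ρ(d) ≤ 3D² yields λ ≥ (4/3) q_min / D² ≥ log 2 · q_min / D². *)

Lemma lsum_minus (l : list nat) (F G : nat -> R) :
  fold_right Rplus 0 (map (fun y => F y - G y) l) =
  fold_right Rplus 0 (map F l) - fold_right Rplus 0 (map G l).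
Proof. induction l as [|a l IH]; simpl; [lra | rewrite IH; lra]. Qed.

Lemma lsum_scal (l : list nat) (c : R) (F : nat -> R) :
  fold_right Rplus 0 (map (fun y => c * F y) l) = c * fold_right Rplus 0 (map F l).
Proof. induction l as [|a l IH]; simpl; [lra | rewrite IH; lra]. Qed.

Lemma lsum_ext (l : list nat) (F G : nat -> R) :
  (forall y, In y l -> F y = G y) ->
  fold_right Rplus 0 (map F l) = fold_right Rplus 0 (map G l).
Proof. induction l as [|a l IH]; simpl; intros H; [lra | rewrite H, IH; auto]. Qed.

Lemma lsum_nonneg (l : list nat) (F : nat -> R) :
  (forall y, In y l -> 0 <= F y) -> 0 <= fold_right Rplus 0 (map F l).
Proof.
induction l as [|a l IH]; simpl; intros H; [lra|].
pose proof (H a (or_introl eq_refl)). pose proof (IH (fun y Hy => H y (or_intror Hy))). lra.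
Qed.

Lemma lsum_ge_term (l : list nat) (F : nat -> R) (a : nat) :
  (forall y, In y l -> 0 <= F y) -> In a l -> F a <= fold_right Rplus 0 (map F l).
Proof.
induction l as [|b l IH]; simpl; intros H Ha; [tauto|].
pose proof (lsum_nonneg l F (fun y Hy => H y (or_intror Hy))).
pose proof (H b (or_introl eq_refl)).
destruct Ha as [<- | Ha]; [lra|].
pose proof (IH (fun y Hy => H y (or_intror Hy)) Ha). lra.
Qed.

Lemma fold_Rmin_le (l : list R) (s a : R) : In a (s :: l) -> fold_right Rmin s l <= a.
Proof.
induction l as [|b l IH]; simpl; intros H.
- destruct H as [<- | []]; lra.
- destruct H as [<- | [<- | H]].
  + eapply Rle_trans; [apply Rmin_r | apply IH; left; reflexivity].
  + apply Rmin_l.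
  + eapply Rle_trans; [apply Rmin_r | apply IH; right; exact H].
Qed.

Lemma fold_Rmin_glb (l : list R) (s b : R) :
  b <= s -> (forall a, In a l -> b <= a) -> b <= fold_right Rmin s l.
Proof.
induction l as [|a l IH]; simpl; intros Hs H; [exact Hs|].
apply Rmin_glb; [apply H; left; reflexivity | apply IH; auto].
Qed.

Lemma list_argmax {A : Type} (l : list A) (r : A -> R) :
  l <> [] -> exists a, In a l /\ forall b, In b l -> r b <= r a.
Proof.
induction l as [|a l IH]; intros Hne; [congruence|].
destruct l as [|a' l'].
- exists a. split; [left; reflexivity|]. intros b [<- | []]; lra.
- destruct (IH ltac:(discriminate)) as [m [Hm Hmax]].
  destruct (Rle_lt_dec (r a) (r m)).
  + exists m. split; [right; exact Hm|]. intros b [<- | Hb]; auto.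
  + exists a. split; [left; reflexivity|].
    intros b [<- | Hb]; [lra | pose proof (Hmax b Hb); lra].
Qed.

Lemma max_over_distinct_pairs (n : nat) (r : nat -> nat -> R) :
  (exists u v, (u < n)%nat /\ (v < n)%nat /\ u <> v) ->
  exists x y, (x < n)%nat /\ (y < n)%nat /\ x <> y /\
    forall u v, (u < n)%nat -> (v < n)%nat -> u <> v -> r u v <= r x y.
Proof.
intros [u0 [v0 [Hu0 [Hv0 Huv0]]]].
set (P := filter (fun p => negb (Nat.eqb (fst p) (snd p))) (vpairs n)).
assert (HinP : forall u v, In (u, v) P <-> (u < n)%nat /\ (v < n)%nat /\ u <> v).
{ intros u v. unfold P, vpairs. rewrite filter_In, in_prod_iff, !in_seq. simpl.
  rewrite negb_true_iff, Nat.eqb_neq. lia. }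
destruct (list_argmax P (fun p => r (fst p) (snd p))) as [[x y] [Hxy Hmax]].
{ intros HP. assert (H : In (u0, v0) P) by (apply HinP; auto). rewrite HP in H. destruct H. }
apply HinP in Hxy. destruct Hxy as [Hx [Hy Hne]].
exists x, y. repeat split; auto.
intros u v Hu Hv Huv. apply (Hmax (u, v)), HinP. auto.
Qed.

Section GraphDistance.
Variables (n : nat) (q : nat -> nat -> R).
Hypothesis Hconn : connected n q.
Hypothesis Hrev : reversible n q.

Lemma adjb_pos x z : adjb q x z = true -> 0 < q x z.
Proof. unfold adjb; destruct (Rlt_dec 0 (q x z)); auto; discriminate. Qed.

Lemma pos_adjb x z : 0 < q x z -> adjb q x z = true.
Proof. unfold adjb; destruct (Rlt_dec 0 (q x z)); auto; contradiction. Qed.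

Lemma reach_concat k1 k2 x y z :
  reachb n q k1 x y = true -> reachb n q k2 y z = true -> reachb n q (k1 + k2) x z = true.
Proof.
revert x. induction k1 as [|k IH]; intros x H1 H2; simpl in *.
- apply Nat.eqb_eq in H1. subst. exact H2.
- apply existsb_exists in H1. destruct H1 as [w [Hw Hb]].
  apply andb_true_iff in Hb. destruct Hb as [Ha Hr].
  apply existsb_exists. exists w. split; [exact Hw|].
  apply andb_true_iff. split; [exact Ha | apply IH; assumption].
Qed.

Lemma reach_edge x w : (w < n)%nat -> 0 < q x w -> reachb n q 1 x w = true.
Proof.
intros Hw Hq. simpl. apply existsb_exists. exists w. split.
- apply in_seq; lia.
- rewrite pos_adjb by exact Hq. simpl. apply Nat.eqb_refl.
Qed.

(* Reversibility makes the edge relation symmetric. *)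
Lemma edge_sym x w : (x < n)%nat -> (w < n)%nat -> 0 < q x w -> 0 < q w x.
Proof.
intros Hx Hw Hq. destruct Hrev as [m [Hm Hs]]. specialize (Hs x w Hx Hw).
pose proof (Hm x Hx). pose proof (Hm w Hw).
destruct (Rle_lt_dec (q w x) 0); [nra | assumption].
Qed.

Lemma reach_sym k x y : (x < n)%nat -> reachb n q k x y = true -> reachb n q k y x = true.
Proof.
revert x. induction k as [|k IH]; intros x Hx H; simpl in H.
- apply Nat.eqb_eq in H. subst. simpl. apply Nat.eqb_refl.
- apply existsb_exists in H. destruct H as [w [Hw Hb]].
  apply andb_true_iff in Hb. destruct Hb as [Ha Hr]. apply in_seq in Hw.
  rewrite <- Nat.add_1_r. apply reach_concat with w.
  + apply IH; [lia | exact Hr].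
  + apply reach_edge; [exact Hx | apply edge_sym; [exact Hx | lia | apply adjb_pos, Ha]].
Qed.

Lemma walk_reach x y : walk n q x y -> exists k, reachb n q k x y = true.
Proof.
intros H; induction H as [x | x z y Hz Hqz _ [k Hk]].
- exists 0%nat. simpl. apply Nat.eqb_refl.
- exists (S k). simpl. apply existsb_exists. exists z. split.
  + apply in_seq; lia.
  + rewrite pos_adjb by exact Hqz. exact Hk.
Qed.

Definition is_walk (p : nat -> nat) (k : nat) : Prop :=
  forall i, (i < k)%nat -> (p (S i) < n)%nat /\ 0 < q (p i) (p (S i)).

Lemma reach_is_walk k x y :
  reachb n q k x y = true -> exists p, p 0%nat = x /\ p k = y /\ is_walk p k.
Proof.
revert x. induction k as [|k IH]; intros x H; simpl in H.
- apply Nat.eqb_eq in H. subst. exists (fun _ => y). split; [reflexivity | split; [reflexivity | intros i Hi; lia]].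
- apply existsb_exists in H. destruct H as [w [Hw Hb]].
  apply andb_true_iff in Hb. destruct Hb as [Ha Hr]. apply in_seq in Hw.
  destruct (IH w Hr) as [p [Hp0 [Hpk Hpw]]].
  exists (fun i => match i with O => x | S j => p j end).
  split; [reflexivity | split; [exact Hpk|]].
  intros [|j] Hi.
  + rewrite Hp0. split; [lia | apply adjb_pos, Ha].
  + apply Hpw; lia.
Qed.

Lemma is_walk_reach k p : is_walk p k -> reachb n q k (p 0%nat) (p k) = true.
Proof.
revert p. induction k as [|k IH]; intros p Hw; simpl.
- apply Nat.eqb_refl.
- apply existsb_exists. exists (p 1%nat). destruct (Hw 0%nat ltac:(lia)) as [H1 H2].
  split; [apply in_seq; lia|]. apply andb_true_iff. split.
  + apply pos_adjb, H2.
  + apply (IH (fun i => p (S i))). intros i Hi. apply Hw. lia.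
Qed.

Lemma walk_repeats (p : nat -> nat) k : (n <= k)%nat ->
  (forall i, (i <= k)%nat -> (p i < n)%nat) ->
  exists i j, (i < j)%nat /\ (j <= k)%nat /\ p i = p j.
Proof.
intros Hk Hp.
assert (Hnd : ~ NoDup (map p (seq 0 (S k)))).
{ intros Hnd. assert (Hi : incl (map p (seq 0 (S k))) (seq 0 n)).
  { intros a Ha. apply in_map_iff in Ha. destruct Ha as [i [<- Hi]]. apply in_seq in Hi.
    apply in_seq. specialize (Hp i ltac:(lia)). lia. }
  pose proof (NoDup_incl_length Hnd Hi) as HL. rewrite length_map, !length_seq in HL. lia. }
apply NNPP. intros Hno. apply Hnd. apply (NoDup_nth _ (p 0%nat)).
rewrite length_map, length_seq. intros i j Hi Hj Heq.
rewrite !map_nth, !seq_nth in Heq by lia. simpl in Heq.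
destruct (lt_eq_lt_dec i j) as [[Hl | He] | Hl]; [| exact He |];
  exfalso; apply Hno; [exists i, j | exists j, i]; repeat split; auto; lia.
Qed.

Lemma is_walk_shortcut p k i j : (i < j)%nat -> (j <= k)%nat -> p i = p j -> is_walk p k ->
  is_walk (fun m => if Nat.leb m i then p m else p (m + (j - i))%nat) (k - (j - i)).
Proof.
intros Hij Hjk Heq Hw m Hm.
destruct (Nat.leb_spec (S m) i), (Nat.leb_spec m i); try lia.
- apply Hw; lia.
- replace m with i by lia. rewrite Heq.
  replace (S i + (j - i))%nat with (S j) by lia. apply Hw; lia.
- replace (S m + (j - i))%nat with (S (m + (j - i))) by lia. apply Hw; lia.
Qed.

Lemma reach_short x y k : (x < n)%nat -> reachb n q k x y = true ->
  exists j, (j < n)%nat /\ reachb n q j x y = true.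
Proof.
intros Hx. induction k as [k IH] using lt_wf_ind. intros H.
destruct (lt_dec k n) as [Hl | Hl]; [exists k; auto|].
destruct (reach_is_walk k x y H) as [p [Hp0 [Hpk Hpw]]].
destruct (walk_repeats p k ltac:(lia)) as [i [j [Hij [Hjk Heq]]]].
{ intros [|m] Hm; [lia | apply Hpw; lia]. }
apply (IH (k - (j - i))%nat ltac:(lia)).
set (p' := fun m => if Nat.leb m i then p m else p (m + (j - i))%nat).
assert (Hp'0 : p' 0%nat = x) by exact Hp0.
assert (Hp'k : p' (k - (j - i))%nat = y).
{ unfold p'. destruct (Nat.leb_spec (k - (j - i)) i).
  - replace (k - (j - i))%nat with i by lia. rewrite Heq. replace j with k by lia. exact Hpk.
  - replace (k - (j - i) + (j - i))%nat with k by lia. exact Hpk. }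
rewrite <- Hp'0, <- Hp'k. apply is_walk_reach, is_walk_shortcut; auto.
Qed.

Lemma dist_aux_spec x y fuel : forall k0,
  (k0 <= dist_aux n q x y k0 fuel <= k0 + fuel)%nat /\
  (forall j, (k0 <= j < dist_aux n q x y k0 fuel)%nat -> reachb n q j x y = false) /\
  ((dist_aux n q x y k0 fuel < k0 + fuel)%nat -> reachb n q (dist_aux n q x y k0 fuel) x y = true).
Proof.
induction fuel as [|f IH]; intros k0; simpl.
- repeat split; intros; lia.
- destruct (reachb n q k0 x y) eqn:E.
  + repeat split; intros; [lia | lia | lia | exact E].
  + destruct (IH (S k0)) as [A [B C]]. repeat split; [lia | lia | |].
    * intros j Hj. destruct (Nat.eq_dec j k0); [subst; exact E | apply B; lia].
    * intros Hl. apply C. lia.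
Qed.

Lemma dist_le x y j : reachb n q j x y = true -> (dist n q x y <= j)%nat.
Proof.
intros H. unfold dist. destruct (dist_aux_spec x y n 0) as [_ [B _]].
destruct (le_lt_dec (dist_aux n q x y 0 n) j) as [Hle | Hlt]; [exact Hle|].
rewrite B in H; [discriminate | lia].
Qed.

Lemma dist_reach x y : (x < n)%nat -> (y < n)%nat -> reachb n q (dist n q x y) x y = true.
Proof.
intros Hx Hy. destruct (walk_reach x y (Hconn x y Hx Hy)) as [k Hk].
destruct (reach_short x y k Hx Hk) as [j [Hj Hr]].
pose proof (dist_le x y j Hr). unfold dist in *.
destruct (dist_aux_spec x y n 0) as [_ [_ C]]. apply C. lia.
Qed.

Lemma dist_refl x : dist n q x x = 0%nat.
Proof. pose proof (dist_le x x 0) as H. simpl in H. rewrite Nat.eqb_refl in H. specialize (H eq_refl). lia. Qed.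

Lemma dist_pos x y : (x < n)%nat -> (y < n)%nat -> x <> y -> (1 <= dist n q x y)%nat.
Proof.
intros Hx Hy Hne. pose proof (dist_reach x y Hx Hy) as H.
destruct (dist n q x y); [|lia]. simpl in H. apply Nat.eqb_eq in H. contradiction.
Qed.

Lemma dist_tri x y z : (x < n)%nat -> (y < n)%nat -> (z < n)%nat ->
  (dist n q x z <= dist n q x y + dist n q y z)%nat.
Proof. intros Hx Hy Hz. apply dist_le, reach_concat with y; apply dist_reach; assumption. Qed.

Lemma dist_sym x y : (x < n)%nat -> (y < n)%nat -> dist n q x y = dist n q y x.
Proof.
intros Hx Hy. apply Nat.le_antisymm; apply dist_le, reach_sym, dist_reach; assumption.
Qed.

Lemma dist_edge x w : (w < n)%nat -> 0 < q x w -> (dist n q x w <= 1)%nat.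
Proof. intros. apply dist_le, reach_edge; assumption. Qed.

Lemma geodesic_neighbour x y : (x < n)%nat -> (y < n)%nat -> x <> y ->
  exists w, (w < n)%nat /\ 0 < q x w /\ (dist n q w y + 1 <= dist n q x y)%nat.
Proof.
intros Hx Hy Hne. pose proof (dist_pos x y Hx Hy Hne) as Hp.
pose proof (dist_reach x y Hx Hy) as H.
destruct (dist n q x y) as [|k]; [lia|]. simpl in H.
apply existsb_exists in H. destruct H as [w [Hw Hb]].
apply andb_true_iff in Hb. destruct Hb as [Ha Hr]. apply in_seq in Hw.
exists w. repeat split; [lia | apply adjb_pos, Ha|].
pose proof (dist_le w y k Hr). lia.
Qed.

Lemma dist_le_diam x y : (x < n)%nat -> (y < n)%nat -> (dist n q x y <= diam n q)%nat.
Proof.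
intros Hx Hy. unfold diam.
assert (Hin : In (x, y) (vpairs n)) by (apply in_prod; apply in_seq; lia).
induction (vpairs n) as [|p l IH]; simpl in *; [tauto|].
destruct Hin as [-> | Hin]; [simpl; lia | specialize (IH Hin); lia].
Qed.

End GraphDistance.

Lemma lap_diff n q f h w : laplacian n q f w - laplacian n q h w =
  vsum n (fun z => q w z * ((f z - h z) - (f w - h w))).
Proof. unfold laplacian, vsum. rewrite <- lsum_minus. apply lsum_ext. intros. ring. Qed.

Lemma lap_scal n q h a w : a <> 0 ->
  laplacian n q (fun v => h v / a) w = laplacian n q h w / a.
Proof.
intros Ha. unfold laplacian, vsum.
match goal with |- _ = ?S / a => replace (S / a) with (/ a * S) by (unfold Rdiv; ring) end.
rewrite <- lsum_scal. apply lsum_ext. intros. field. exact Ha.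
Qed.

Lemma lap_touch_gap n q f h w z :
  (forall u, (u < n)%nat -> 0 <= q w u) -> (z < n)%nat ->
  (forall u, (u < n)%nat -> f w - h w <= f u - h u) ->
  q w z * ((f z - h z) - (f w - h w)) <= laplacian n q f w - laplacian n q h w.
Proof.
intros Hq Hz Hmin. rewrite lap_diff. unfold vsum.
apply (lsum_ge_term _ (fun u => q w u * (f u - h u - (f w - h w)))).
- intros u Hu. apply in_seq in Hu. apply Rmult_le_pos; [apply Hq; lia|].
  pose proof (Hmin u ltac:(lia)). lra.
- apply in_seq; lia.
Qed.

Lemma qmin_le n q x w : (x < n)%nat -> (w < n)%nat -> 0 < q x w -> qmin n q <= q x w.
Proof.
intros Hx Hw Hq. unfold qmin.
assert (Hin : In (q x w) (map (fun p => q (fst p) (snd p))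
            (filter (fun p => adjb q (fst p) (snd p)) (vpairs n)))).
{ apply (in_map (fun p => q (fst p) (snd p)) _ (x, w)). apply filter_In. split.
  - apply in_prod; apply in_seq; lia.
  - apply pos_adjb, Hq. }
revert Hin. destruct (map _ _) as [|s t]; [intros [] | apply fold_Rmin_le].
Qed.

Lemma qmin_nonneg n q : 0 <= qmin n q.
Proof.
unfold qmin.
assert (Hpos : forall a, In a (map (fun p => q (fst p) (snd p))
                 (filter (fun p => adjb q (fst p) (snd p)) (vpairs n))) -> 0 <= a).
{ intros a Ha. apply in_map_iff in Ha. destruct Ha as [p [<- Hp]].
  apply filter_In in Hp. left. apply adjb_pos, Hp. }
revert Hpos. destruct (map _ _) as [|s t]; intros Hpos; [lra|].
apply fold_Rmin_glb; [apply Hpos; left; reflexivity | intros a Ha; apply Hpos; right; exact Ha].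
Qed.

(* The comparison profile ρ_D(s) = s (2D + 2 - s), a concave parabola
   vanishing at 0, and its increment ρ_D(d+1) - ρ_D(d). *)
Definition rho (D s : nat) : R := INR s * (2 * INR D + 2 - INR s).

Definition rho_slope (D d : nat) : R := 2 * INR D + 1 - 2 * INR d.

Lemma rho_zero D : rho D 0 = 0.
Proof. unfold rho. simpl. ring. Qed.

Lemma rho_pos D s : (1 <= s)%nat -> (s <= D)%nat -> 0 < rho D s.
Proof. intros H1 H2. apply le_INR in H1, H2. simpl in H1. unfold rho. nra. Qed.

Lemma rho_slope_ge_1 D d : (d <= D)%nat -> 1 <= rho_slope D d.
Proof. intros H. apply le_INR in H. unfold rho_slope. lra. Qed.

(* Discrete concavity: on integers, ρ lies below its chord through d, d+1. *)
Lemma rho_below_chord D d s : rho D s <= rho D d + rho_slope D d * (INR s - INR d).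
Proof.
unfold rho, rho_slope.
assert (0 <= (INR s - INR d) * (INR s - INR d - 1)).
{ destruct (le_lt_dec s d) as [H | H].
  - apply le_INR in H. nra.
  - assert (INR d + 1 <= INR s) by (rewrite <- S_INR; apply le_INR; lia). nra. }
nra.
Qed.

Lemma rho_drop D d k : (k + 1 <= d)%nat -> (d <= D)%nat ->
  rho D k <= rho D d - (rho_slope D d + 2).
Proof.
intros Hk Hd. apply le_INR in Hk, Hd. rewrite plus_INR in Hk. simpl in Hk.
pose proof (pos_INR k). unfold rho, rho_slope.
assert (0 <= (INR d - INR k - 1) * (2 * INR D + 2 - 2 * INR d)) by nra.
assert (0 <= (INR d - INR k - 1) * (INR d - INR k + 1)) by nra.
nra.
Qed.

(* The inf-convolution h(v) = min_{z ∈ V} f(z) + α d(z,v) (seeded with the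
   term z = 0): the largest α-Lipschitz function below f. *)
Section InfConvolution.
Variables (n : nat) (q : nat -> nat -> R).
Hypothesis Hconn : connected n q.

Definition infconv (f : nat -> R) (al : R) (v : nat) : R :=
  fold_right Rmin (f 0%nat + al * INR (dist n q 0 v))
    (map (fun z => f z + al * INR (dist n q z v)) (seq 0 n)).

Lemma infconv_le f al v z : (z < n)%nat -> infconv f al v <= f z + al * INR (dist n q z v).
Proof.
intros Hz. apply fold_Rmin_le. right.
apply (in_map (fun z => f z + al * INR (dist n q z v))), in_seq. lia.
Qed.

Lemma infconv_glb f al v b : (0 < n)%nat ->
  (forall z, (z < n)%nat -> b <= f z + al * INR (dist n q z v)) -> b <= infconv f al v.
Proof.
intros Hn H. apply fold_Rmin_glb; [apply H, Hn|].
intros a Ha. apply in_map_iff in Ha. destruct Ha as [z [<- Hz]]. apply in_seq in Hz.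
apply H. lia.
Qed.

Lemma infconv_le_self f al v : (v < n)%nat -> infconv f al v <= f v.
Proof.
intros Hv. pose proof (infconv_le f al v v Hv) as H.
rewrite dist_refl in H. simpl in H. lra.
Qed.

Lemma infconv_lipschitz f al v v' : 0 <= al -> (v < n)%nat -> (v' < n)%nat ->
  infconv f al v <= infconv f al v' + al * INR (dist n q v' v).
Proof.
intros Hal Hv Hv'.
cut (infconv f al v - al * INR (dist n q v' v) <= infconv f al v'); [lra|].
apply infconv_glb; [lia|]. intros z Hz.
pose proof (infconv_le f al v z Hz).
pose proof (dist_tri n q Hconn z v' v Hz Hv' Hv) as T.
apply le_INR in T. rewrite plus_INR in T. nra.
Qed.

End InfConvolution.

Lemma Rabs_div_le_1 a k : 0 < k -> - k <= a <= k -> Rabs (a / k) <= 1.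
Proof.
intros Hk Ha. apply Rabs_le.
replace (a / k) with (a * / k) by reflexivity.
pose proof (Rinv_0_lt_compat k Hk).
split; apply (Rmult_le_reg_r k); auto; rewrite Rmult_assoc, Rinv_l; lra.
Qed.

(* Indeed h/α is admissible in the definition of κ(x,y). *)
Lemma lipschitz_extremal_lap n q h al x y :
  connected n q -> reversible n q -> ollivier_nonneg n q ->
  0 < al -> (x < n)%nat -> (y < n)%nat -> x <> y ->
  (forall u v, (u < n)%nat -> (v < n)%nat -> h u <= h v + al * INR (dist n q v u)) ->
  h y = h x + al * INR (dist n q x y) ->
  laplacian n q h y <= laplacian n q h x.
Proof.
intros Hconn Hrev Hcurv Hal Hx Hy Hxy Hlip Hext.
assert (Hdist : forall u v, (u < n)%nat -> (v < n)%nat -> u <> v -> 1 <= INR (dist n q u v)).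
{ intros u v Hu Hv Huv. apply (le_INR 1), dist_pos; assumption. }
set (H := fun v => h v / al).
assert (HgradH : grad n q H y x = 1).
{ pose proof (Hdist x y Hx Hy Hxy).
  unfold grad, H. rewrite (dist_sym n q Hconn Hrev y x Hy Hx), Hext. field. lra. }
assert (Hsup : grad_sup_eq1 n q H).
{ split.
  - intros u v Hu Hv Huv. pose proof (Hdist u v Hu Hv Huv).
    pose proof (Hlip u v Hu Hv). pose proof (Hlip v u Hv Hu).
    rewrite (dist_sym n q Hconn Hrev v u Hv Hu) in *.
    unfold grad, H.
    replace ((h u / al - h v / al) / INR (dist n q u v))
      with ((h u - h v) / (al * INR (dist n q u v))) by (field; lra).
    apply Rabs_div_le_1; nra.
  - exists y, x. repeat split; auto. rewrite HgradH. apply Rabs_R1. }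
pose proof (Hcurv x y Hx Hy Hxy H Hsup HgradH) as Hk.
pose proof (Hdist x y Hx Hy Hxy).
unfold grad, H in Hk. rewrite !lap_scal in Hk by lra.
set (Lx := laplacian n q h x) in *. set (Ly := laplacian n q h y) in *.
replace ((Lx / al - Ly / al) / INR (dist n q x y))
  with ((Lx - Ly) * / (al * INR (dist n q x y))) in Hk by (field; lra).
assert (0 < / (al * INR (dist n q x y))) by (apply Rinv_0_lt_compat; nra).
nra.
Qed.

Section ModulusArgument.
Variables (n : nat) (q : nat -> nat -> R).
Hypothesis Hq : forall x y, (x < n)%nat -> (y < n)%nat -> 0 <= q x y.
Hypothesis Hconn : connected n q.
Hypothesis Hrev : reversible n q.
Hypothesis Hcurv : ollivier_nonneg n q.

Variables (f : nat -> R) (M : R) (x y : nat).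
Hypotheses (HM : 0 < M) (Hx : (x < n)%nat) (Hy : (y < n)%nat) (Hxy : x <> y).
Hypothesis Hmod : forall u v, (u < n)%nat -> (v < n)%nat ->
  f v - f u <= M * rho (diam n q) (dist n q u v).
Hypothesis Hext : f y - f x = M * rho (diam n q) (dist n q x y).

Local Notation D := (diam n q).
Local Notation d := (dist n q x y).
Local Notation al := (M * rho_slope D d).
Local Notation h := (infconv n q f al).

(* The slope α is positive since d ≤ D. *)
Lemma extremal_dist_le_diam : (d <= D)%nat.
Proof. apply dist_le_diam; assumption. Qed.

Lemma slope_pos : 0 < al.
Proof. pose proof (rho_slope_ge_1 D d extremal_dist_le_diam). nra. Qed.

(* By concavity of ρ, f grows at most with slope α beyond the extremal value. *)
Lemma modulus_below_chord u v : (u < n)%nat -> (v < n)%nat ->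
  f v - f u <= M * rho D d + al * (INR (dist n q u v) - INR d).
Proof.
intros Hu Hv. pose proof (Hmod u v Hu Hv).
pose proof (rho_below_chord D d (dist n q u v)). nra.
Qed.

Lemma h_lipschitz u v : (u < n)%nat -> (v < n)%nat -> h u <= h v + al * INR (dist n q v u).
Proof. intros. apply infconv_lipschitz; auto. pose proof slope_pos. lra. Qed.

Lemma h_lower v : (v < n)%nat -> f v + al * INR d - M * rho D d <= h v.
Proof.
intros Hv. apply infconv_glb; [lia|]. intros z Hz.
pose proof (modulus_below_chord z v Hz Hv). lra.
Qed.

Lemma h_at_x : h x = f x.
Proof.
pose proof (infconv_le_self n q f al x Hx). pose proof (h_lower y Hy).
pose proof (h_lipschitz y x Hy Hx). lra.
Qed.

Lemma h_at_y : h y = h x + al * INR d.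
Proof.
pose proof (h_lower y Hy). pose proof (h_lipschitz y x Hy Hx).
rewrite h_at_x in *. lra.
Qed.

Lemma gap_at_x : exists w, (w < n)%nat /\ 0 < q x w /\ 2 * M <= (f w - h w) - (f x - h x).
Proof.
destruct (geodesic_neighbour n q Hconn x y Hx Hy Hxy) as [w [Hw [Hqw Hgeo]]].
exists w. repeat split; auto.
pose proof (infconv_le n q f al w x Hx) as Hhw.
pose proof (dist_edge n q x w Hw Hqw) as Hxw. apply (le_INR _ 1) in Hxw. simpl in Hxw.
pose proof (Hmod w y Hw Hy).
pose proof (rho_drop D d (dist n q w y) Hgeo extremal_dist_le_diam).
pose proof slope_pos. rewrite h_at_x.
assert (al * INR (dist n q x w) <= al) by nra.
nra.
Qed.

Lemma gap_at_y : exists v, (v < n)%nat /\ 0 < q y v /\ 2 * M <= (h v - f v) - (h y - f y).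
Proof.
destruct (geodesic_neighbour n q Hconn y x Hy Hx (not_eq_sym Hxy)) as [v [Hv [Hqv Hgeo]]].
exists v. repeat split; auto.
rewrite <- (dist_sym n q Hconn Hrev x y Hx Hy) in Hgeo.
pose proof (h_lipschitz y v Hy Hv) as Hl.
rewrite (dist_sym n q Hconn Hrev v y Hv Hy) in Hl.
pose proof (dist_edge n q y v Hv Hqv) as Hyv. apply (le_INR _ 1) in Hyv. simpl in Hyv.
pose proof (Hmod x v Hx Hv) as Hxv.
rewrite (dist_sym n q Hconn Hrev x v Hx Hv) in Hxv.
pose proof (rho_drop D d (dist n q v x) Hgeo extremal_dist_le_diam).
pose proof slope_pos. pose proof h_at_y. pose proof h_at_x.
assert (al * INR (dist n q y v) <= al) by nra.
assert (M * rho D (dist n q v x) <= M * (rho D d - (rho_slope D d + 2))) by nra.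
nra.
Qed.

Lemma laplacian_gap : 4 * M * qmin n q <= laplacian n q f x - laplacian n q f y.
Proof.
assert (Hcurv_h : laplacian n q h y <= laplacian n q h x).
{ apply (lipschitz_extremal_lap n q h al x y); auto using slope_pos, h_lipschitz, h_at_y. }
destruct gap_at_x as [w [Hw [Hqw Hgw]]].
destruct gap_at_y as [v [Hv [Hqv Hgv]]].
assert (Hmin_x : forall u, (u < n)%nat -> f x - h x <= f u - h u).
{ intros u Hu. pose proof (infconv_le_self n q f al u Hu). rewrite h_at_x. lra. }
assert (Hmin_y : forall u, (u < n)%nat -> h y - f y <= h u - f u).
{ intros u Hu. pose proof (h_lower u Hu). rewrite h_at_y, h_at_x. lra. }
pose proof (lap_touch_gap n q f h x w (fun u => Hq x u Hx) Hw Hmin_x) as Hlx.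
pose proof (lap_touch_gap n q h f y v (fun u => Hq y u Hy) Hv Hmin_y) as Hly.
pose proof (qmin_le n q x w Hx Hw Hqw). pose proof (qmin_le n q y v Hy Hv Hqv).
pose proof (qmin_nonneg n q).
assert (2 * M * qmin n q <= q x w * (f w - h w - (f x - h x))) by nra.
assert (2 * M * qmin n q <= q y v * (h v - f v - (h y - f y))) by nra.
lra.
Qed.

End ModulusArgument.

Lemma optimal_modulus n q f u0 v0 : connected n q ->
  (u0 < n)%nat -> (v0 < n)%nat -> f u0 < f v0 ->
  exists M x y, 0 < M /\ (x < n)%nat /\ (y < n)%nat /\ x <> y /\
    (forall u v, (u < n)%nat -> (v < n)%nat -> f v - f u <= M * rho (diam n q) (dist n q u v)) /\
    f y - f x = M * rho (diam n q) (dist n q x y).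
Proof.
intros Hconn Hu0 Hv0 Hlt.
set (r := fun u v => (f v - f u) / rho (diam n q) (dist n q u v)).
assert (Hrho : forall u v, (u < n)%nat -> (v < n)%nat -> u <> v ->
                 0 < rho (diam n q) (dist n q u v)).
{ intros u v Hu Hv Huv. apply rho_pos; [apply dist_pos | apply dist_le_diam]; assumption. }
assert (Huv0 : u0 <> v0) by (intros ->; lra).
destruct (max_over_distinct_pairs n r) as [x [y [Hx [Hy [Hxy Hmax]]]]].
{ exists u0, v0. auto. }
exists (r x y), x, y. repeat split; auto.
- pose proof (Hmax u0 v0 Hu0 Hv0 Huv0). pose proof (Hrho u0 v0 Hu0 Hv0 Huv0).
  assert (0 < r u0 v0) by (apply Rdiv_lt_0_compat; lra). lra.
- intros u v Hu Hv. destruct (Nat.eq_dec u v) as [<- | Huv].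
  + rewrite dist_refl, rho_zero. lra.
  + pose proof (Hmax u v Hu Hv Huv). pose proof (Hrho u v Hu Hv Huv).
    replace (f v - f u) with (r u v * rho (diam n q) (dist n q u v)) by (unfold r; field; lra).
    apply Rmult_le_compat_r; lra.
- pose proof (Hrho x y Hx Hy Hxy). unfold r. field. lra.
Qed.

Lemma eigenfunction_nonconstant n q lam f : lam <> 0 ->
  (exists x, (x < n)%nat /\ f x <> 0) ->
  (forall x, (x < n)%nat -> - laplacian n q f x = lam * f x) ->
  exists u v, (u < n)%nat /\ (v < n)%nat /\ f u < f v.
Proof.
intros Hlam [x0 [Hx0 Hfx0]] Heig. apply NNPP. intros Hconst.
assert (Hlap : laplacian n q f x0 = 0).
{ unfold laplacian, vsum.
  rewrite (lsum_ext _ _ (fun y => 0 * q x0 y)), lsum_scal; [ring|].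
  intros y Hy. apply in_seq in Hy.
  destruct (Rtotal_order (f y) (f x0)) as [H | [H | H]];
    [exfalso; apply Hconst; exists y, x0; repeat split; auto; lia | rewrite H; ring |
     exfalso; apply Hconst; exists x0, y; repeat split; auto; lia]. }
pose proof (Heig x0 Hx0) as E. rewrite Hlap in E.
apply Hfx0, (Rmult_eq_reg_l lam); [lra | exact Hlam].
Qed.

(* log 2 < 1, since e > 2. *)
Lemma ln2_lt_1 : ln 2 < 1.
Proof.
rewrite <- (ln_exp 1). apply ln_increasing; [lra|].
pose proof (exp_ineq1 1 ltac:(lra)). lra.
Qed.

(* Final arithmetic: 4 Q ≤ λ ρ_D(d) with 1 ≤ d ≤ D gives λ ≥ (4/3) Q / D²,
   which beats log 2 · Q / D². *)
Lemma spectral_bound_from_gap (Q lam : R) (D d : nat) :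
  0 <= Q -> (1 <= d)%nat -> (d <= D)%nat -> 4 * Q <= lam * rho D d ->
  ln 2 * Q / INR D ^ 2 <= lam.
Proof.
intros HQ Hd1 HdD Hgap.
pose proof (rho_pos D d Hd1 HdD) as Hrho.
apply le_INR in Hd1, HdD. simpl in Hd1.
assert (Hrho3 : rho D d <= 3 * INR D ^ 2) by (unfold rho; simpl; nra).
assert (Hlam : 0 <= lam) by nra.
assert (lam * rho D d <= lam * (3 * INR D ^ 2)) by (apply Rmult_le_compat_l; lra).
pose proof ln2_lt_1.
unfold Rdiv. apply (Rmult_le_reg_r (INR D ^ 2)); [simpl; nra|].
rewrite Rmult_assoc, Rinv_l, Rmult_1_r by (simpl; nra). nra.
Qed.

Theorem mainTheorem17 (n : nat) (q : nat -> nat -> R)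
  (Hq : forall x y, (x < n)%nat -> (y < n)%nat -> 0 <= q x y)
  (Hconn : connected n q)
  (Hrev : reversible n q)
  (Hcurv : ollivier_nonneg n q) :
  forall lam : R, lam <> 0 -> is_eigenvalue_negLap n q lam ->
    ln 2 * qmin n q / INR (diam n q) ^ 2 <= lam.
Proof.
intros lam Hlam [f [Hnz Heig]].
destruct (eigenfunction_nonconstant n q lam f Hlam Hnz Heig) as [u0 [v0 [Hu0 [Hv0 Hlt]]]].
destruct (optimal_modulus n q f u0 v0 Hconn Hu0 Hv0 Hlt)
  as [M [x [y [HM [Hx [Hy [Hxy [Hmod Hext]]]]]]]].
pose proof (laplacian_gap n q Hq Hconn Hrev Hcurv f M x y HM Hx Hy Hxy Hmod Hext) as Hgap.
assert (Hev : laplacian n q f x - laplacian n q f y = lam * (f y - f x)).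
{ pose proof (Heig x Hx). pose proof (Heig y Hy). lra. }
rewrite Hext in Hev.
apply (spectral_bound_from_gap _ _ _ (dist n q x y) (qmin_nonneg n q)).
- apply dist_pos; assumption.
- apply dist_le_diam; assumption.
- apply (Rmult_le_reg_l M); [exact HM|]. lra.
Qed.
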